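(* Assume the setting and the algorithm FDGM-AA described in the context, with $\beta\in(0,1/L)$. Then for every $k\ge0$, $\sum_{i\in\mathcal V}w_i^{k}=0$ and $$ D(\mathbf w^{k+1})-D(\mathbf w^k)\le-\theta_1\sum_{\{i,j\}\in\mathcal E^k}h_{ij}^k\big\|\nabla d_i(w_i^k)-\nabla d_j(w_j^k)\big\|^2, $$ where $\theta_1=\min\{\beta(1-\beta L),c_1\}$. In particular $\{D(\mathbf w^k)\}_{k\ge0}$ is non-increasing.
   Context: Setting. Let $n,d\ge 1$ be integers and $\mathcal V=\{1,\dots,n\}$. For each $i\in\mathcal V$, $f_i:\mathbb R^d\to\mathbb R\cup\{+\infty\}$ is proper, lower semicontinuous and $\mu$-strongly convex for some $\mu>0$ (i.e. $f_i-\frac{\mu}{2}\|\cdot\|^2$ is convex), and the interior of $\bigcap_{i\in\mathcal V}\mathrm{dom} f_i$ is nonempty. Let $d_i(w)=\sup_{x\in\mathbb R^d}\{\langle w,x\rangle-f_i(x)\}$ be the convex conjugate of $f_i$; it is differentiable with $L$-Lipschitz gradient where $L=1/\mu$, and $\nabla d_i(w)=\arg\max_x\{\langle w,x\rangle-f_i(x)\}$. For $\mathbf w=(w_1,\dots,w_n)\in(\mathbb R^d)^n$ put $D(\mathbf w)=\sum_{i\in\mathcal V}d_i(w_i)$. Networks. $\mathcal G^k=(\mathcal V,\mathcal E^k)$, $k\ge0$, is a sequence of undirected graphs; $\mathcal N_i^k=\{j:\{i,j\}\in\mathcal E^k\}$. For each $\{i,j\}\in\mathcal E^k$ a weight $h_{ij}^k=h_{ji}^k>0$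 is given, with $\underline h:=\inf_{k\ge0}\min_{\{i,j\}\in\mathcal E^k}h_{ij}^k>0$ and $\sum_{j\in\mathcal N_i^k}h_{ij}^k\le 1$ for all $i,k$. Algorithm FDGM-AA. Parameters: step-size $\beta>0$, constants $c_1,c_2>0$, integer memory $m\ge1$. Initial point $w_1^0,\dots,w_n^0\in\mathbb R^d$ with $\sum_i w_i^0=0$. At iteration $k\ge0$, for each edge $\{i,j\}\in\mathcal E^k$: let $\mathcal I_{ij}^k=\mathcal I_{ji}^k$ be the set of the $\min\{m,N\}$ largest indices $t\le k$ with $\{i,j\}\in\mathcal E^t$, where $N$ is the number of such $t$ (so $k\in\mathcal I_{ij}^k$). Let $W_{ij}^k$ and $D_{ij}^k$ be the $d\times|\mathcal I_{ij}^k|$ matrices with columns $w_i^t$ and $\nabla d_i(w_i^t)$, $t\in\mathcal I_{ij}^k$, and define $W_{ji}^k$, $D_{ji}^k$ analogously with $w_j^t$, $\nabla d_j(w_j^t)$. Let $(\alpha_{ij}^k,\alpha_{ji}^k)$ be any minimizer of $\|D_{ij}^k\alpha_{ij}-D_{ji}^k\alpha_{ji}\|^2$ subject to $W_{ij}^k\alpha_{ij}+W_{ji}^k\alpha_{ji}=w_i^k+w_j^k$, $\mathbf 1^T\alpha_{ij}=1$, $\mathbf 1^T\alpha_{ji}=1$. Set $\tilde w_{ij}=W_{ij}^k\alpha_{ij}^k$, $\tilde w_{ji}=W_{ji}^k\alpha_{ji}^k$, $\bar w_{ij}=\tilde w_{ij}-\beta(D_{ij}^k\alpha_{ij}^k-D_{ji}^k\alpha_{ji}^k)$,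 $\bar w_{ji}=\tilde w_{ji}-\beta(D_{ji}^k\alpha_{ji}^k-D_{ij}^k\alpha_{ij}^k)$. Let $g=\nabla d_i(w_i^k)-\nabla d_j(w_j^k)$ and $\rho=\min\{-c_1\|g\|^2,\,-c_2(\|\bar w_{ij}-w_i^k\|^2+\|\bar w_{ji}-w_j^k\|^2)\}$. Safe-guard test (one of the following two, fixed for the whole run): (S1) $d_i(\bar w_{ij})+d_j(\bar w_{ji})-d_i(w_i^k)-d_j(w_j^k)\le\rho$; or (S2) $\langle\nabla d_i(w_i^k),\bar w_{ij}-w_i^k\rangle+\frac L2\|\bar w_{ij}-w_i^k\|^2+\langle\nabla d_j(w_j^k),\bar w_{ji}-w_j^k\rangle+\frac L2\|\bar w_{ji}-w_j^k\|^2\le\rho$. If the test holds, set $(w_{ij}^{k+\frac12},w_{ji}^{k+\frac12})=(\bar w_{ij},\bar w_{ji})$; otherwise set $w_{ij}^{k+\frac12}=w_i^k-\beta g$, $w_{ji}^{k+\frac12}=w_j^k+\beta g$. Finally, for every $i\in\mathcal V$, $w_i^{k+1}=(1-\sum_{j\in\mathcal N_i^k}h_{ij}^k)w_i^k+\sum_{j\in\mathcal N_i^k}h_{ij}^k w_{ij}^{k+\frac12}$. Write $\mathbf w^k=(w_1^k,\dots,w_n^k)$ and $x_i^k=\nabla d_i(w_i^k)$. *)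

From HB Require Import structures.
From mathcomp Require Import all_boot all_order all_algebra.
From mathcomp Require Import all_classical all_reals all_analysis.
Set Implicit Arguments. Unset Strict Implicit. Unset Printing Implicit Defensive.
Import Order.TTheory GRing.Theory Num.Theory.
Import numFieldNormedType.Exports.
Local Open Scope classical_set_scope.
Local Open Scope ring_scope.

Definition dotv (R : realType) (d : nat) (u v : 'rV[R]_d) : R :=
  \sum_(l < d) u 0 l * v 0 l.
Definition sqnorm (R : realType) (d : nat) (u : 'rV[R]_d) : R := dotv u u.
Definition enorm (R : realType) (d : nat) (u : 'rV[R]_d) : R := Num.sqrt (sqnorm u).

Definition proper_fun (R : realType) (d : nat) (f : 'rV[R]_d -> \bar R) : Prop :=
  (exists x, (f x < +oo)%E) /\ (forall x, (-oo < f x)%E).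

Definition lsc_fun (R : realType) (d : nat) (f : 'rV[R]_d -> \bar R) : Prop :=
  forall (x : 'rV[R]_d) (a : R), (a%:E < f x)%E -> \forall y \near x, (a%:E < f y)%E.

Definition strongly_convex (R : realType) (d : nat) (mu : R) (f : 'rV[R]_d -> \bar R) : Prop :=
  let g := fun x => (f x - (mu / 2 * sqnorm x)%:E)%E in
  forall (x y : 'rV[R]_d) (t : R), 0 < t < 1 ->
    (g (t *: x + (1 - t) *: y)%R <= t%:E * g x + (1 - t)%R%:E * g y)%E.

Definition domf (R : realType) (d : nat) (f : 'rV[R]_d -> \bar R) : set 'rV[R]_d :=
  [set x | (f x < +oo)%E].

(* convex conjugate d(w) = sup_x <w,x> - f(x) (finite under the standing assumptions) *)
Definition conjf (R : realType) (d : nat) (f : 'rV[R]_d -> \bar R) (w : 'rV[R]_d) : R :=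
  fine (ereal_sup [set ((dotv w x)%:E - f x)%E | x in [set: 'rV[R]_d]]).

(* grad d(w) = argmax_x { <w,x> - f(x) } *)
Definition gradconj (R : realType) (d : nat) (f : 'rV[R]_d -> \bar R) (w : 'rV[R]_d)
  : 'rV[R]_d :=
  xget 0 [set x | forall y, ((dotv w y)%:E - f y <= (dotv w x)%:E - f x)%E].

Definition Dfun (R : realType) (n d : nat) (f : 'I_n -> 'rV[R]_d -> \bar R)
  (w : 'I_n -> 'rV[R]_d) : R := \sum_(i < n) conjf (f i) (w i).

(* I_ij^k : the min{m,N} largest t <= k with {i,j} in E^t *)
Definition mem_idx (n : nat) (adj : nat -> 'I_n -> 'I_n -> bool) (m k : nat)
  (i j : 'I_n) : seq nat :=
  take m [seq t <- rev (iota 0 k.+1) | adj t i j].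

(* feasibility of (a_ij, a_ji) for the AA subproblem of edge {i,j} at iteration k;
   coefficient vectors indexed by t in I_ij^k are represented as functions nat -> R *)
Definition aa_feasible (R : realType) (n d : nat) (adj : nat -> 'I_n -> 'I_n -> bool)
  (m : nat) (w : nat -> 'I_n -> 'rV[R]_d) (k : nat) (i j : 'I_n) (a b : nat -> R) : Prop :=
  let I := mem_idx adj m k i j in
  \sum_(t <- I) a t *: w t i + \sum_(t <- I) b t *: w t j = w k i + w k j
  /\ \sum_(t <- I) a t = 1 /\ \sum_(t <- I) b t = 1.

Definition aa_objective (R : realType) (n d : nat) (f : 'I_n -> 'rV[R]_d -> \bar R)
  (adj : nat -> 'I_n -> 'I_n -> bool) (m : nat) (w : nat -> 'I_n -> 'rV[R]_d)
  (k : nat) (i j : 'I_n) (a b : nat -> R) : R :=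
  let I := mem_idx adj m k i j in
  sqnorm (\sum_(t <- I) a t *: gradconj (f i) (w t i)
          - \sum_(t <- I) b t *: gradconj (f j) (w t j)).

Definition aa_minimizer (R : realType) (n d : nat) (f : 'I_n -> 'rV[R]_d -> \bar R)
  (adj : nat -> 'I_n -> 'I_n -> bool) (m : nat) (w : nat -> 'I_n -> 'rV[R]_d)
  (k : nat) (i j : 'I_n) (a b : nat -> R) : Prop :=
  aa_feasible adj m w k i j a b /\
  forall a' b', aa_feasible adj m w k i j a' b' ->
    aa_objective f adj m w k i j a b <= aa_objective f adj m w k i j a' b'.

(* w_ij^{k+1/2}, computed with a = alpha_ij^k and b = alpha_ji^k.
   safeS1 = true : test (S1);  safeS1 = false : test (S2). *)
Definition half_step (R : realType) (n d : nat) (f : 'I_n -> 'rV[R]_d -> \bar R)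
  (L beta c1 c2 : R) (safeS1 : bool)
  (adj : nat -> 'I_n -> 'I_n -> bool) (m : nat) (w : nat -> 'I_n -> 'rV[R]_d)
  (k : nat) (i j : 'I_n) (a b : nat -> R) : 'rV[R]_d :=
  let I := mem_idx adj m k i j in
  let wt_ij := \sum_(t <- I) a t *: w t i in
  let wt_ji := \sum_(t <- I) b t *: w t j in
  let D_ij := \sum_(t <- I) a t *: gradconj (f i) (w t i) in
  let D_ji := \sum_(t <- I) b t *: gradconj (f j) (w t j) in
  let wb_ij := wt_ij - beta *: (D_ij - D_ji) in
  let wb_ji := wt_ji - beta *: (D_ji - D_ij) in
  let xi := gradconj (f i) (w k i) in
  let xj := gradconj (f j) (w k j) in
  let g := xi - xj in
  let rho := Num.min (- (c1 * sqnorm g))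
                     (- (c2 * (sqnorm (wb_ij - w k i) + sqnorm (wb_ji - w k j)))) in
  let test :=
    if safeS1 then
      conjf (f i) wb_ij + conjf (f j) wb_ji - conjf (f i) (w k i) - conjf (f j) (w k j)
        <= rho
    else
      dotv xi (wb_ij - w k i) + L / 2 * sqnorm (wb_ij - w k i)
      + dotv xj (wb_ji - w k j) + L / 2 * sqnorm (wb_ji - w k j) <= rho in
  if test then wb_ij else w k i - beta *: g.

(* Each d_i is finite and, as the conjugate of a mu-strongly convex function, smooth with
   constant L = 1/mu: d(v) <= d(w) + <grad d(w), v - w> + L/2 ||v - w||^2.  The maximiser
   defining grad d_i(w) exists because <w, .> - f_i is upper semicontinuous and coercive,
   f_i - mu/2 ||.||^2 being convex and bounded below near a point of its domain.
   On an edge {i, j} the half-step keeps w_i + w_j and decreases d_i + d_j by at least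
   theta1 ||grad d_i - grad d_j||^2: through the safeguard when it accepts the accelerated
   step (for (S2) via the smoothness bound), and by the smoothness bound for the plain
   gradient step otherwise.  As w_i^(k+1) is a convex combination of w_i^k and the
   half-steps, Jensen's inequality for d_i passes these decreases on to D, each edge being
   seen once from each endpoint. *)

From HB Require Import structures.
From mathcomp Require Import all_boot all_order all_algebra.
From mathcomp Require Import all_classical all_reals all_analysis.
From mathcomp Require Import ring lra.
Import Order.TTheory GRing.Theory Num.Theory.
Import numFieldNormedType.Exports.
Local Open Scope classical_set_scope.
Local Open Scope ring_scope.

Lemma seq_argmin {T : eqType} {R : realType} (G : T -> \bar R) (s : seq T) {x0 : T} :
  x0 \in s -> exists2 x, x \in s & forall y, y \in s -> (G x <= G y)%E.
Proof.
elim: s x0 => [//|a [|b s] IH] x0 _.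
  by exists a => [|y]; rewrite ?inE // => /eqP ->.
have [x xs Hx] := IH b (mem_head b s).
have [Gax|Gxa] := leP (G a) (G x).
  exists a => [|y]; first by rewrite inE eqxx.
  by rewrite inE => /orP[/eqP -> // | /Hx]; exact: le_trans.
exists x => [|y]; first by rewrite inE xs orbT.
by rewrite inE => /orP[/eqP -> | /Hx //]; exact: ltW.
Qed.

Section LscMinCompact.
Import finmap.

(* Otherwise each x in K has some yo x in K with F (yo x) < F x; the open sets
   [F > F (yo x)] cover K, and in a finite subcover the x minimising F (yo x) is absurd. *)
Lemma lsc_min_compact {T : ptopologicalType} {R : realType} {K : set T} {F : T -> \bar R} :
  compact K -> K !=set0 -> (forall x, (-oo < F x)%E) ->
  (forall x (a : R), (a%:E < F x)%E -> \forall y \near x, (a%:E < F y)%E) ->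
  exists2 x, K x & forall y, K y -> (F x <= F y)%E.
Proof.
move=> cK [k0 Kk0] F_gtNy F_lsc; apply: contrapT => no_min.
have lower x : K x -> exists y, K y /\ (F y < F x)%E.
  move=> Kx; apply: contrapT => no_lower; apply: no_min; exists x => // y Ky.
  by rewrite leNgt; apply/negP => Fyx; apply: no_lower; exists y.
pose yo x := xget k0 [set y | K y /\ (F y < F x)%E].
have yoP x : K x -> K (yo x) /\ (F (yo x) < F x)%E.
  move=> Kx; rewrite /yo; case: xgetP => //= nex.
  by have [y Hy] := lower x Kx; case: (nex y).
have yo_fin x : K x -> F (yo x) \is a fin_num.
  by move=> /yoP[_ lt]; rewrite fin_numElt F_gtNy (lt_le_trans lt) ?leey.
pose U x := [set z | ((fine (F (yo x)))%:E < F z)%E].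
have U_open x : open (U x).
  apply: (lower_semicontinuousP F).1 => z a /F_lsc Fz.
  by exists (fun y => (a%:E < F y)%E).
have KU : K `<=` cover K U.
  by move=> x Kx; exists x => //; rewrite /U /= fineK ?yo_fin //; case: (yoP x Kx).
move: cK; rewrite compact_cover => /(_ T K U (fun x _ => U_open x) KU) [D' sD' KD'].
have [x1 x1D'] : exists x, x \in D' by have [x xD' _] := KD' k0 Kk0; exists x.
have [x xD' xmin] := seq_argmin (fun x => F (yo x)) _ x1D'.
have inK z : z \in D' -> K z by move=> /sD'; rewrite in_setE.
have [Kyx _] := yoP x (inK x xD').
have [x' x'D' Ux'] := KD' _ Kyx.
have Kx' : K x' by apply: inK; exact: x'D'.
move: Ux'; rewrite /U /= fineK ?yo_fin //.
by rewrite ltNge xmin //; exact: x'D'.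
Qed.

End LscMinCompact.

Section Euclidean.
Context {R : realType} {d : nat}.
Implicit Types u v x : 'rV[R]_d.

Lemma dotvC u v : dotv u v = dotv v u.
Proof. by apply: eq_bigr => l _; rewrite mulrC. Qed.

Lemma dotvDl u v x : dotv (u + v) x = dotv u x + dotv v x.
Proof. by rewrite /dotv -big_split; apply: eq_bigr => l _; rewrite mxE mulrDl. Qed.

Lemma dotvZl a u x : dotv (a *: u) x = a * dotv u x.
Proof. by rewrite /dotv mulr_sumr; apply: eq_bigr => l _; rewrite mxE mulrA. Qed.

Lemma dotvNl u x : dotv (- u) x = - dotv u x.
Proof. by rewrite /dotv -sumrN; apply: eq_bigr => l _; rewrite mxE mulNr. Qed.

Lemma dotvBl u v x : dotv (u - v) x = dotv u x - dotv v x.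
Proof. by rewrite dotvDl dotvNl. Qed.

Lemma dotvDr u v x : dotv x (u + v) = dotv x u + dotv x v.
Proof. by rewrite dotvC dotvDl !(dotvC x). Qed.

Lemma dotvZr a u x : dotv x (a *: u) = a * dotv x u.
Proof. by rewrite dotvC dotvZl dotvC. Qed.

Lemma dotvNr u x : dotv x (- u) = - dotv x u.
Proof. by rewrite dotvC dotvNl dotvC. Qed.

Lemma dotvBr u v x : dotv x (u - v) = dotv x u - dotv x v.
Proof. by rewrite dotvDr dotvNr. Qed.

Lemma dotv0l x : dotv 0 x = 0.
Proof. by rewrite /dotv big1 // => l _; rewrite mxE mul0r. Qed.

Lemma dotv_suml (I : Type) (s : seq I) (P : pred I) (F : I -> 'rV[R]_d) x :
  dotv (\sum_(j <- s | P j) F j) x = \sum_(j <- s | P j) dotv (F j) x.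
Proof. by elim/big_rec2: _ => [|j a b _ <-]; rewrite ?dotv0l ?dotvDl. Qed.

Lemma sqnorm_ge0 u : 0 <= sqnorm u.
Proof. by apply: sumr_ge0 => l _; rewrite -expr2 sqr_ge0. Qed.

Lemma sqnormD u v : sqnorm (u + v) = sqnorm u + 2 * dotv u v + sqnorm v.
Proof. rewrite /sqnorm !dotvDl !dotvDr (dotvC v u); ring. Qed.

Lemma sqnormB u v : sqnorm (u - v) = sqnorm u - 2 * dotv u v + sqnorm v.
Proof. rewrite /sqnorm !dotvDl !dotvDr !dotvNl !dotvNr opprK (dotvC v u); ring. Qed.

Lemma sqnormZ a u : sqnorm (a *: u) = a ^+ 2 * sqnorm u.
Proof. by rewrite /sqnorm dotvZl dotvZr mulrA expr2. Qed.

Lemma sqnormN u : sqnorm (- u) = sqnorm u.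
Proof. by rewrite /sqnorm dotvNl dotvNr opprK. Qed.

Lemma sqnormBC u v : sqnorm (u - v) = sqnorm (v - u).
Proof. by rewrite -sqnormN opprB. Qed.

Lemma sqr_coord_le_sqnorm u l : u 0 l ^+ 2 <= sqnorm u.
Proof.
rewrite /sqnorm /dotv (bigD1 l) //= -expr2 lerDl.
by apply: sumr_ge0 => j _; rewrite -expr2 sqr_ge0.
Qed.

Lemma enorm_ge0 u : 0 <= enorm u.
Proof. exact: sqrtr_ge0. Qed.

Lemma sqr_enorm u : enorm u ^+ 2 = sqnorm u.
Proof. by rewrite /enorm sqr_sqrtr // sqnorm_ge0. Qed.

Lemma abs_coord_le_enorm u l : `|u 0 l| <= enorm u.
Proof. by rewrite /enorm -sqrtr_sqr; apply: ler_wsqrtr; exact: sqr_coord_le_sqnorm. Qed.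

Lemma dotv_le_young c u v : 0 < c -> dotv u v <= c / 2 * sqnorm v + sqnorm u / (2 * c).
Proof.
move=> c_gt0; have := sqnorm_ge0 (u - c *: v).
rewrite sqnormB sqnormZ dotvZr => sq_ge0; rewrite -subr_ge0.
have -> : c / 2 * sqnorm v + sqnorm u / (2 * c) - dotv u v
   = (sqnorm u - 2 * (c * dotv u v) + c ^+ 2 * sqnorm v) / (2 * c).
  by field; rewrite gt_eqF.
apply: divr_ge0 => //; lra.
Qed.

Lemma dotv_continuous (w : 'rV[R]_d) : continuous (dotv w).
Proof.
move=> y; rewrite /dotv; elim: (index_enum _) => [|l s IH].
  under eq_fun do rewrite big_nil; exact: cst_continuous.
under eq_fun do rewrite big_cons.
apply: (@continuousD _ _ _ (fun y : 'rV_d => w 0 l * y 0 l)) => //.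
apply: (@continuousM _ _ (fun _ => w 0 l) (fun y : 'rV_d => y 0 l)).
  exact: cst_continuous.
exact: coord_continuous.
Qed.

Lemma box_compact (a b : 'I_d -> R) :
  compact [set v : 'rV[R]_d | forall i, `[a i, b i]%classic (v 0 i)].
Proof. exact: (rV_compact (fun i => @segment_compact R (a i) (b i))). Qed.

End Euclidean.

Lemma ler_of_forall_01 (R : realFieldType) (G P : R) :
  (forall t, 0 < t < 1 -> (1 - t) * P <= G) -> P <= G.
Proof.
move=> le_t.
have half : (1 - 1 / 2) * P <= G by apply: le_t; apply/andP; split; lra.
have [P_le0|P_gt0] := lerP P 0; first lra.
rewrite leNgt; apply/negP => lt_GP.
have t01 : 0 < (P - G) / (2 * P) < 1.
  by apply/andP; split; [rewrite divr_gt0 //; lra | rewrite ltr_pdivrMr; lra].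
have := le_t _ t01.
have -> : (1 - (P - G) / (2 * P)) * P = (P + G) / 2 by field; rewrite gt_eqF.
lra.
Qed.

Section StronglyConvexConjugate.
Context {R : realType} {d : nat}.
Local Notation V := 'rV[R]_d.

Lemma lsc_min_box {F : V -> \bar R} {x1 : V} {r : R} :
  (forall x, (-oo < F x)%E) -> lsc_fun F -> (forall i, `|x1 0 i| <= r) ->
  (forall (y : V) i, r < `|y 0 i| -> (F x1 <= F y)%E) ->
  exists x, forall y, (F x <= F y)%E.
Proof.
move=> F_gtNy F_lsc x1_box F_outside.
pose K := [set v : V | forall i, `[- r, r]%classic (v 0 i)].
have inK (v : V) : (forall i, `|v 0 i| <= r) -> K v.
  by move=> v_box i; rewrite /= in_itv /= -ler_norml.
have [xm _ xm_min] := lsc_min_compact (box_compact (fun=> - r) (fun=> r))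
  (ex_intro _ x1 (inK _ x1_box)) F_gtNy F_lsc.
exists xm => y; have [/inK /xm_min //|] := pselect (forall i, `|y 0 i| <= r).
move=> /existsNP[i /negP]; rewrite -ltNge => /F_outside.
by apply: le_trans; apply/xm_min/inK.
Qed.

Lemma lsc_fun_subr_dotv {f : V -> \bar R} (w : V) :
  (forall x, (-oo < f x)%E) -> lsc_fun f ->
  lsc_fun (fun y => f y - (dotv w y)%:E)%E.
Proof.
move=> f_gtNy f_lsc x a lt_a.
have [e e_gt0 lt_ae] : exists2 e : R, 0 < e & ((a + dotv w x + 2 * e)%:E < f x)%E.
  move: lt_a (f_gtNy x); case: (f x) => [r| |] //= lt_a _.
    exists ((r - dotv w x - a) / 4); rewrite -EFinB lte_fin in lt_a.
      by apply: divr_gt0 => //; lra.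
    by rewrite lte_fin; lra.
  by exists 1; rewrite ?ltry.
have lt_ax : ((a + dotv w x + e)%:E < f x)%E by apply: lt_trans lt_ae; rewrite lte_fin; lra.
have := dotv_continuous w x => /cvgrPdist_lt /(_ e e_gt0) near_dot.
apply: filterS2 (f_lsc _ _ lt_ax) near_dot => y lt_fy.
rewrite ltr_norml => /andP[dot_lt _].
move: lt_fy (f_gtNy y); case: (f y) => [r| |] //= lt_fy _.
  by rewrite -EFinB lte_fin; rewrite lte_fin in lt_fy; lra.
by rewrite ltry.
Qed.

Context {f : V -> \bar R} {mu : R}.
Hypotheses (mu_gt0 : 0 < mu) (f_proper : proper_fun f) (f_lsc : lsc_fun f)
  (f_sconvex : strongly_convex mu f).

Lemma f_gtNy x : (-oo < f x)%E.
Proof. by case: f_proper. Qed.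

Lemma f_fine {x} : (f x < +oo)%E -> f x = (fine (f x))%:E.
Proof. by move=> lt_fx; rewrite fineK // fin_numElt f_gtNy. Qed.

Lemma f_lbound_box (x1 : V) : exists M : R, forall z : V,
  (forall l, `|z 0 l - x1 0 l| <= 1) -> (M%:E <= f z)%E.
Proof.
pose K := [set v : V | forall i, `[x1 0 i - 1, x1 0 i + 1]%classic (v 0 i)].
have inK (z : V) : (forall l, `|z 0 l - x1 0 l| <= 1) -> K z.
  move=> z_box i; rewrite /= in_itv /=; have := z_box i; rewrite ler_norml.
  by move=> /andP[? ?]; apply/andP; split; lra.
have x1K : K x1 by apply: inK => l; rewrite subrr normr0.
have [xm _ xm_min] := lsc_min_compact (box_compact (fun l => x1 0 l - 1) (fun l => x1 0 l + 1))
  (ex_intro _ x1 x1K) f_gtNy f_lsc.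
move: (f_gtNy xm) xm_min; case: (f xm) => [r| |] //= _ xm_min.
  by exists r => z /inK /xm_min.
by exists 0 => z /inK /xm_min; rewrite leye_eq => /eqP ->; rewrite leey.
Qed.

Lemma f_sub_quad_lbound_box (x1 : V) : exists M : R, forall z : V,
  (f z < +oo)%E -> (forall l, `|z 0 l - x1 0 l| <= 1) -> M <= fine (f z) - mu / 2 * sqnorm z.
Proof.
have [M M_lb] := f_lbound_box x1.
pose Q := \sum_(l < d) (`|x1 0 l| + 1) ^+ 2.
exists (M - mu / 2 * Q) => z lt_fz z_box.
have : sqnorm z <= Q.
  rewrite /sqnorm /dotv /Q; apply: ler_sum => l _.
  have : `|z 0 l| <= `|x1 0 l| + 1.
    by have := ler_normD (z 0 l - x1 0 l) (x1 0 l); rewrite subrK; have := z_box l; lra.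
  by rewrite -expr2 -real_normK ?num_real // => /(lerXn2r 2) -> //; rewrite nnegrE.
rewrite -(ler_pM2l (_ : 0 < mu / 2)) ?divr_gt0 //.
by have := M_lb z z_box; rewrite (f_fine lt_fz) lee_fin; lra.
Qed.

(* The point of [x1, y] at distance rho / (2 + rho) < 1 from x1 lies in the unit box, where
   g := f - mu/2 ||.||^2 is bounded below; convexity of g along the segment turns this into
   a lower bound on g y that is affine in rho = ||y - x1||. *)
Lemma f_segment_lbound (x1 : V) : (f x1 < +oo)%E -> exists A C : R, forall y : V,
  (f y < +oo)%E -> A - C * enorm (y - x1) <= fine (f y) - mu / 2 * sqnorm y.
Proof.
move=> lt_fx1; have [M g_lb] := f_sub_quad_lbound_box x1.
pose g y := fine (f y) - mu / 2 * sqnorm y.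
have M_gx1 : M <= g x1 by apply: g_lb => // l; rewrite subrr normr0.
exists (2 * M - g x1), (g x1 - M) => y lt_fy.
pose rho := enorm (y - x1); have rho_ge0 : 0 <= rho := enorm_ge0 _.
pose t := (2 + rho)^-1.
have t_gt0 : 0 < t by rewrite /t invr_gt0; lra.
have t_lt1 : t < 1 by rewrite /t invf_lt1; lra.
pose z := t *: y + (1 - t) *: x1.
have z_box l : `|z 0 l - x1 0 l| <= 1.
  have -> : z 0 l - x1 0 l = t * (y - x1) 0 l by rewrite /z !mxE; ring.
  have t_rho : t * (2 + rho) = 1 by rewrite /t mulVf // gt_eqF //; lra.
  rewrite normrM (gtr0_norm t_gt0).
  have : t * `|(y - x1) 0 l| <= t * rho by rewrite ler_pM2l // abs_coord_le_enorm.
  nra.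
have := f_sconvex y x1 t; rewrite t_gt0 t_lt1 => /(_ isT).
rewrite -/z (f_fine lt_fy) (f_fine lt_fx1) -!EFinB -!EFinM -EFinD => conv.
have lt_fz : (f z < +oo)%E by move: conv; case: (f z) => [r| |] //= _; rewrite ltry.
move: conv; rewrite (f_fine lt_fz) -EFinB lee_fin -/(g z) -/(g y) -/(g x1) => conv.
have : M * (2 + rho) <= g y + (1 + rho) * g x1.
  rewrite -ler_pdivlMr; last lra.
  have <- : t * g y + (1 - t) * g x1 = (g y + (1 + rho) * g x1) / (2 + rho).
    by rewrite /t; field; rewrite gt_eqF //; lra.
  by apply: le_trans conv; exact: g_lb.
have -> : 2 * M - g x1 - (g x1 - M) * rho = M * (2 + rho) - (1 + rho) * g x1 by ring.
lra.
Qed.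

Lemma conj_objective_coercive (w : V) : exists B : R, forall y : V, (f y < +oo)%E ->
  B + mu / 8 * sqnorm y <= fine (f y) - dotv w y.
Proof.
have [[x1 lt_fx1] _] := f_proper; have [A [C lb]] := f_segment_lbound x1 lt_fx1.
exists (A - mu / 4 * sqnorm x1 - 2 * C ^+ 2 / mu - 2 * sqnorm w / mu) => y lt_fy.
have := lb y lt_fy; set rho := enorm (y - x1) => lb_y.
have rho_sq : mu / 8 * rho ^+ 2 <= mu / 8 * (2 * sqnorm y + 2 * sqnorm x1).
  rewrite ler_pM2l ?divr_gt0 // /rho sqr_enorm sqnormB.
  by have := sqnorm_ge0 (y + x1); rewrite sqnormD; lra.
have C_rho : C * rho <= mu / 8 * rho ^+ 2 + 2 * C ^+ 2 / mu.
  rewrite -subr_ge0.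
  have -> : mu / 8 * rho ^+ 2 + 2 * C ^+ 2 / mu - C * rho = mu / 8 * (rho - 4 * C / mu) ^+ 2.
    by field; rewrite gt_eqF.
  by rewrite mulr_ge0 ?sqr_ge0 // divr_ge0 // ltW.
have := dotv_le_young (mu / 4) w y; rewrite divr_gt0 // => /(_ isT).
have -> : mu / 4 / 2 = mu / 8 by field.
have -> : sqnorm w / (2 * (mu / 4)) = 2 * sqnorm w / mu by field; rewrite gt_eqF.
lra.
Qed.

Lemma conj_objective_argmax (w : V) : exists x, (f x < +oo)%E /\
  forall y, ((dotv w y)%:E - f y <= (dotv w x)%:E - f x)%E.
Proof.
have [[x1 lt_fx1] _] := f_proper; have [B coercive] := conj_objective_coercive w.
pose F y := (f y - (dotv w y)%:E)%E.
pose T := fine (f x1) - dotv w x1.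
have F_x1 : F x1 = T%:E by rewrite /F (f_fine lt_fx1) -EFinB.
(* Large enough for the box of radius r to contain x1 and, by coercivity, F > F x1 outside. *)
pose r := 1 + 8 * `|T - B| / mu + \sum_(l < d) `|x1 0 l|.
have TB_ge0 : 0 <= 8 * `|T - B| / mu by rewrite divr_ge0 // ?ltW // mulr_ge0.
have sum_ge0 : 0 <= \sum_(l < d) `|x1 0 l| by rewrite sumr_ge0.
have r_ge1 : 1 <= r by rewrite /r; lra.
have x1_box i : `|x1 0 i| <= r.
  have : `|x1 0 i| <= \sum_(l < d) `|x1 0 l| by rewrite (bigD1 i) //= lerDl sumr_ge0.
  by rewrite /r; lra.
have F_gtNy y : (-oo < F y)%E.
  by rewrite /F; move: (f_gtNy y); case: (f y) => [r'| |] //= _; rewrite -EFinB ltNye.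
have F_outside (y : V) i : r < `|y 0 i| -> (F x1 <= F y)%E.
  move=> lt_r; rewrite F_x1 /F.
  move: (coercive y) (f_gtNy y); case: (f y) => [r'| |] //= coercive_y _; last first.
    by rewrite addye ?leey.
  rewrite -EFinB lee_fin; have := coercive_y (ltry _); rewrite /= => lb.
  have r_sq : r < sqnorm y.
    by have := sqr_coord_le_sqnorm y i; rewrite -real_normK ?num_real //; nra.
  have : mu / 8 * (1 + 8 * `|T - B| / mu) <= mu / 8 * sqnorm y.
    by rewrite ler_pM2l ?divr_gt0 //; rewrite /r in r_sq; lra.
  have -> : mu / 8 * (1 + 8 * `|T - B| / mu) = mu / 8 + `|T - B| by field; rewrite gt_eqF.
  have : 0 < mu / 8 by rewrite divr_gt0.
  by have := ler_norm (T - B); lra.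
have [x x_min] := lsc_min_box F_gtNy (lsc_fun_subr_dotv w f_gtNy f_lsc) x1_box F_outside.
have lt_fx : (f x < +oo)%E.
  by move: (x_min x1); rewrite F_x1 /F; case: (f x) => [r'| |] //=; rewrite ?ltry.
exists x; split => // y; have := x_min y; rewrite /F (f_fine lt_fx) -EFinB.
move: (f_gtNy y); case: (f y) => [r'| |] //= _.
  by rewrite -!EFinB !lee_fin; lra.
by rewrite addeNy leNye.
Qed.

Lemma gradconj_argmax (w : V) : (f (gradconj f w) < +oo)%E /\
  forall y, ((dotv w y)%:E - f y <= (dotv w (gradconj f w))%:E - f (gradconj f w))%E.
Proof.
have [x [lt_fx x_max]] := conj_objective_argmax w.
have g_max : forall y, ((dotv w y)%:E - f y <= (dotv w (gradconj f w))%:E - f (gradconj f w))%E.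
  by rewrite /gradconj; case: xgetP => // /(_ x).
split => //; have := g_max x; rewrite (f_fine lt_fx).
by case: (f (gradconj f w)) => [r| |] //= _; rewrite ltry.
Qed.

Lemma conjfE (w : V) : conjf f w = dotv w (gradconj f w) - fine (f (gradconj f w)).
Proof.
have [lt_fx x_max] := gradconj_argmax w.
rewrite /conjf (_ : ereal_sup _ = (dotv w (gradconj f w))%:E - f (gradconj f w))%E.
  by rewrite (f_fine lt_fx).
apply/eqP; rewrite eq_le; apply/andP; split.
  by apply: ge_ereal_sup => _ [y _ <-]; exact: x_max.
by apply: ereal_sup_ubound; exists (gradconj f w).
Qed.

Lemma conjf_ge (w y : V) : (f y < +oo)%E -> dotv w y - fine (f y) <= conjf f w.
Proof.
move=> lt_fy; have [lt_fx x_max] := gradconj_argmax w.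
by have := x_max y; rewrite (f_fine lt_fx) (f_fine lt_fy) -!EFinB lee_fin conjfE.
Qed.

Lemma f_quadratic_growth (w y : V) : (f y < +oo)%E ->
  fine (f (gradconj f w)) + dotv w (y - gradconj f w)
    + mu / 2 * sqnorm (y - gradconj f w) <= fine (f y).
Proof.
move=> lt_fy; have [lt_fx x_max] := gradconj_argmax w.
set x := gradconj f w in lt_fx x_max *.
suff : mu / 2 * sqnorm (y - x) <= fine (f y) - fine (f x) - dotv w (y - x) by lra.
apply: ler_of_forall_01 => t /andP[t_gt0 t_lt1].
pose z := t *: y + (1 - t) *: x.
have := f_sconvex y x t; rewrite t_gt0 t_lt1 => /(_ isT).
rewrite -/z (f_fine lt_fy) (f_fine lt_fx) -!EFinB -!EFinM -EFinD => conv.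
have lt_fz : (f z < +oo)%E by move: conv; case: (f z) => [r| |] //= _; rewrite ltry.
move: conv; rewrite (f_fine lt_fz) -EFinB lee_fin => conv.
have := x_max z; rewrite (f_fine lt_fz) (f_fine lt_fx) -!EFinB lee_fin => opt.
have sq_z : sqnorm z = t * sqnorm y + (1 - t) * sqnorm x - t * (1 - t) * sqnorm (y - x).
  by rewrite /z (sqnormD (t *: y)) !sqnormZ (sqnormB y x) dotvZl dotvZr; ring.
have dot_z : dotv w z = t * dotv w y + (1 - t) * dotv w x by rewrite /z dotvDr !dotvZr.
rewrite sq_z in conv; rewrite dot_z in opt; rewrite dotvBr -(ler_pM2l t_gt0).
lra.
Qed.

Lemma conjf_smooth (w v : V) : conjf f v <= conjf f w + dotv (gradconj f w) (v - w)
   + 1 / mu / 2 * sqnorm (v - w).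
Proof.
rewrite (conjfE v) (conjfE w).
have [lt_fx' _] := gradconj_argmax v.
have growth := f_quadratic_growth w _ lt_fx'.
set x := gradconj f w in growth *; set x' := gradconj f v in growth lt_fx' *.
have young := dotv_le_young mu (v - w) (x' - x) mu_gt0.
rewrite (_ : sqnorm (v - w) / (2 * mu) = 1 / mu / 2 * sqnorm (v - w)) in young; last first.
  by field; rewrite gt_eqF.
have : dotv v x' - dotv w (x' - x) = dotv w x + dotv (v - w) x + dotv (v - w) (x' - x).
  by rewrite !dotvBl !dotvBr; ring.
rewrite (dotvC x); lra.
Qed.

Lemma conjf_jensen (I : finType) (P : pred I) (b : I -> R) (u : V) (v : I -> V) :
  (forall j, P j -> 0 <= b j) -> 0 <= 1 - \sum_(j | P j) b j ->
  conjf f ((1 - \sum_(j | P j) b j) *: u + \sum_(j | P j) b j *: v j)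
   <= (1 - \sum_(j | P j) b j) * conjf f u + \sum_(j | P j) b j * conjf f (v j).
Proof.
move=> b_ge0; set a := 1 - _ => a_ge0; set z := a *: u + _.
rewrite (conjfE z); have [lt_fx _] := gradconj_argmax z.
set x := gradconj f z in lt_fx *.
have -> : dotv z x - fine (f x)
    = a * (dotv u x - fine (f x)) + \sum_(j | P j) b j * (dotv (v j) x - fine (f x)).
  rewrite /z dotvDl dotvZl dotv_suml.
  under [in RHS]eq_bigr do rewrite mulrBr.
  rewrite sumrB -mulr_suml; under eq_bigr do rewrite dotvZl.
  rewrite /a; ring.
rewrite lerD ?ler_wpM2l ?conjf_ge //.
by apply: ler_sum => j Pj; rewrite ler_wpM2l ?b_ge0 ?conjf_ge.
Qed.

End StronglyConvexConjugate.

Section EdgeUpdate.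
Context {R : realType} {d : nat}.
Local Notation V := 'rV[R]_d.

Definition safeguard_test (fi fj : V -> \bar R) (L c1 c2 : R) (S1 : bool) (wi wj ui uj : V)
    : bool :=
  let xi := gradconj fi wi in
  let xj := gradconj fj wj in
  let rho := Num.min (- (c1 * sqnorm (xi - xj)))
                     (- (c2 * (sqnorm (ui - wi) + sqnorm (uj - wj)))) in
  if S1 then conjf fi ui + conjf fj uj - conjf fi wi - conjf fj wj <= rho
  else dotv xi (ui - wi) + L / 2 * sqnorm (ui - wi)
       + dotv xj (uj - wj) + L / 2 * sqnorm (uj - wj) <= rho.

(* [wti], [Di] stand for W_ij alpha_ij and D_ij alpha_ij, and [ui] for \bar w_ij. *)
Definition edge_half_step (fi fj : V -> \bar R) (L beta c1 c2 : R) (S1 : bool)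
    (wi wj wti wtj Di Dj : V) : V :=
  let ui := wti - beta *: (Di - Dj) in
  let uj := wtj - beta *: (Dj - Di) in
  if safeguard_test fi fj L c1 c2 S1 wi wj ui uj then ui
  else wi - beta *: (gradconj fi wi - gradconj fj wj).

Lemma safeguard_testC fi fj L c1 c2 S1 (wi wj ui uj : V) :
  safeguard_test fj fi L c1 c2 S1 wj wi uj ui = safeguard_test fi fj L c1 c2 S1 wi wj ui uj.
Proof.
rewrite /safeguard_test (sqnormBC (gradconj fj wj)) (addrC (sqnorm (uj - wj))).
by case: S1; congr (_ <= _); ring.
Qed.

Lemma edge_half_step_sum fi fj L beta c1 c2 S1 (wi wj wti wtj Di Dj : V) :
  wti + wtj = wi + wj ->
  edge_half_step fi fj L beta c1 c2 S1 wi wj wti wtj Di Dj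
    + edge_half_step fj fi L beta c1 c2 S1 wj wi wtj wti Dj Di = wi + wj.
Proof.
move=> wt_sum; rewrite /edge_half_step; cbv zeta; rewrite (safeguard_testC fi fj).
case: ifP => _; last by rewrite -(opprB (gradconj fi wi)) scalerN !opprK addrACA addNr addr0.
by rewrite -(opprB Di Dj) scalerN opprK addrACA addNr addr0.
Qed.

Variables (fi fj : V -> \bar R) (mu beta c1 c2 : R).
Hypotheses (mu_gt0 : 0 < mu)
  (fi_proper : proper_fun fi) (fi_lsc : lsc_fun fi) (fi_sconvex : strongly_convex mu fi)
  (fj_proper : proper_fun fj) (fj_lsc : lsc_fun fj) (fj_sconvex : strongly_convex mu fj).

Local Notation gdiff wi wj := (gradconj fi wi - gradconj fj wj).

Lemma gradient_pair_descent (wi wj : V) :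
  conjf fi (wi - beta *: gdiff wi wj) + conjf fj (wj - beta *: - gdiff wi wj)
    - conjf fi wi - conjf fj wj
  <= - (beta * (1 - beta * (1 / mu)) * sqnorm (gdiff wi wj)).
Proof.
set g := gdiff wi wj.
have smooth_i := conjf_smooth mu_gt0 fi_proper fi_lsc fi_sconvex wi (wi - beta *: g).
have smooth_j := conjf_smooth mu_gt0 fj_proper fj_lsc fj_sconvex wj (wj - beta *: - g).
have subK (u v : V) : u - v - u = - v by rewrite addrAC subrr add0r.
rewrite subK dotvNr dotvZr sqnormN sqnormZ in smooth_i.
rewrite subK dotvNr dotvZr dotvNr sqnormN sqnormZ sqnormN in smooth_j.
have : beta * dotv (gradconj fi wi) g - beta * dotv (gradconj fj wj) g = beta * sqnorm g.
  by rewrite -mulrBr -dotvBl.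
lra.
Qed.

Lemma safeguard_pair_descent S1 (wi wj ui uj : V) :
  safeguard_test fi fj (1 / mu) c1 c2 S1 wi wj ui uj ->
  conjf fi ui + conjf fj uj - conjf fi wi - conjf fj wj
    <= - (c1 * sqnorm (gdiff wi wj)).
Proof.
rewrite /safeguard_test; set rho := Num.min _ _.
have rho_le : rho <= - (c1 * sqnorm (gdiff wi wj)) by rewrite ge_min lexx.
case: S1 => test; first exact: le_trans test rho_le.
have := conjf_smooth mu_gt0 fi_proper fi_lsc fi_sconvex wi ui.
have := conjf_smooth mu_gt0 fj_proper fj_lsc fj_sconvex wj uj.
lra.
Qed.

Lemma edge_half_step_descent S1 (wi wj wti wtj Di Dj : V) :
  conjf fi (edge_half_step fi fj (1 / mu) beta c1 c2 S1 wi wj wti wtj Di Dj)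
    + conjf fj (edge_half_step fj fi (1 / mu) beta c1 c2 S1 wj wi wtj wti Dj Di)
    - conjf fi wi - conjf fj wj
  <= - (Num.min (beta * (1 - beta * (1 / mu))) c1 * sqnorm (gdiff wi wj)).
Proof.
rewrite /edge_half_step; cbv zeta; rewrite (safeguard_testC fi fj).
set g := gdiff wi wj.
have g_ge0 := sqnorm_ge0 g.
have le_c1 : Num.min (beta * (1 - beta * (1 / mu))) c1 * sqnorm g <= c1 * sqnorm g.
  by rewrite ler_wpM2r // ge_min lexx orbT.
have le_beta : Num.min (beta * (1 - beta * (1 / mu))) c1 * sqnorm g
    <= beta * (1 - beta * (1 / mu)) * sqnorm g.
  by rewrite ler_wpM2r // ge_min lexx.
case: ifP => [/safeguard_pair_descent|_]; first lra.
have -> : gradconj fj wj - gradconj fi wi = - g by rewrite opprB.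
by have := gradient_pair_descent wi wj; lra.
Qed.

End EdgeUpdate.

Lemma half_stepE (R : realType) (n d : nat) (f : 'I_n -> 'rV[R]_d -> \bar R)
    (L beta c1 c2 : R) (S1 : bool) (adj : nat -> 'I_n -> 'I_n -> bool) (m : nat)
    (w : nat -> 'I_n -> 'rV[R]_d) (k : nat) (i j : 'I_n) (a b : nat -> R) :
  half_step f L beta c1 c2 S1 adj m w k i j a b =
  edge_half_step (f i) (f j) L beta c1 c2 S1 (w k i) (w k j)
    (\sum_(t <- mem_idx adj m k i j) a t *: w t i)
    (\sum_(t <- mem_idx adj m k i j) b t *: w t j)
    (\sum_(t <- mem_idx adj m k i j) a t *: gradconj (f i) (w t i))
    (\sum_(t <- mem_idx adj m k i j) b t *: gradconj (f j) (w t j)).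
Proof. by []. Qed.

Lemma mem_idxC {n : nat} {adj : nat -> 'I_n -> 'I_n -> bool} {i j : 'I_n} :
  (forall t, adj t i j = adj t j i) -> forall m k, mem_idx adj m k j i = mem_idx adj m k i j.
Proof. by move=> adjC m k; congr take; apply: eq_filter => t; rewrite adjC. Qed.

Lemma sum_sym_pairs {V : zmodType} {n : nat} (P : 'I_n -> 'I_n -> bool)
    (E : 'I_n -> 'I_n -> V) :
  (forall i j, P i j = P j i) -> (forall i, ~~ P i i) ->
  \sum_(i < n) \sum_(j < n | P i j) E i j
    = \sum_(i < n) \sum_(j < n | (i < j)%N && P i j) (E i j + E j i).
Proof.
move=> P_sym P_irr.
have split_ltgt i : \sum_(j < n | P i j) E i j =
    \sum_(j < n) (if (i < j)%N && P i j then E i j else 0)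
    + \sum_(j < n) (if (j < i)%N && P i j then E i j else 0).
  rewrite big_mkcond -big_split /=; apply: eq_bigr => j _.
  case Pij: (P i j); rewrite ?andbT ?andbF ?addr0 //.
  case: (ltngtP i j) => [||/val_inj eq_ij]; rewrite ?addr0 ?add0r //.
  by move: Pij; rewrite eq_ij (negbTE (P_irr j)).
under eq_bigr => i _ do rewrite split_ltgt.
rewrite big_split /= [X in _ + X]exchange_big -big_split /=; apply: eq_bigr => i _.
rewrite [RHS]big_mkcond -big_split /=; apply: eq_bigr => j _.
by rewrite (P_sym j i); case: ifP => _; rewrite ?addr0.
Qed.

Lemma mix_sum_preserved {R : pzRingType} {M : lmodType R} {n : nat} (P : 'I_n -> 'I_n -> bool)
    (h : 'I_n -> 'I_n -> R) (w : 'I_n -> M) (u : 'I_n -> 'I_n -> M) :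
  (forall i j, P i j = P j i) -> (forall i, ~~ P i i) ->
  (forall i j, P i j -> h i j = h j i) ->
  (forall i j, P i j -> u i j + u j i = w i + w j) ->
  \sum_(i < n) ((1 - \sum_(j | P i j) h i j) *: w i + \sum_(j | P i j) h i j *: u i j)
   = \sum_(i < n) w i.
Proof.
move=> P_sym P_irr h_sym u_sum.
have mix_shift i : (1 - \sum_(j | P i j) h i j) *: w i + \sum_(j | P i j) h i j *: u i j
   = w i + \sum_(j | P i j) h i j *: (u i j - w i).
  rewrite scalerBl scale1r scaler_suml.
  under [X in _ = _ + X]eq_bigr do rewrite scalerBr.
  by rewrite sumrB addrAC addrA.
under eq_bigr => i _ do rewrite mix_shift.
rewrite big_split /= (sum_sym_pairs _ (fun i j => h i j *: (u i j - w i)) P_sym P_irr).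
rewrite [X in _ + X]big1 ?addr0 // => i _; rewrite big1 // => j /andP[_ Pij].
by rewrite (h_sym _ _ Pij) -scalerDr addrACA -opprD u_sum // subrr scaler0.
Qed.

Lemma fdgm_rate_ge0 {R : realFieldType} {mu beta c1 : R} :
  0 < mu -> 0 < beta < 1 / (1 / mu) -> 0 < c1 ->
  0 <= Num.min (beta * (1 - beta * (1 / mu))) c1.
Proof.
move=> mu_gt0 /andP[beta_gt0]; rewrite !div1r invrK => beta_lt c1_gt0.
rewrite le_min (ltW c1_gt0) andbT; apply: mulr_ge0; first exact: ltW.
by rewrite subr_ge0 ler_pdivrMr // mul1r ltW.
Qed.

Section FDGM.
Context {R : realType} {n d : nat} {f : 'I_n -> 'rV[R]_d -> \bar R} {mu : R}
  {adj : nat -> 'I_n -> 'I_n -> bool} {h : nat -> 'I_n -> 'I_n -> R}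
  {beta c1 c2 : R} {m : nat} {safeS1 : bool} {alpha : nat -> 'I_n -> 'I_n -> nat -> R}
  {w : nat -> 'I_n -> 'rV[R]_d}.
Hypotheses (mu_gt0 : 0 < mu) (f_proper : forall i, proper_fun (f i))
  (f_lsc : forall i, lsc_fun (f i)) (f_sconvex : forall i, strongly_convex mu (f i))
  (adj_sym : forall k i j, adj k i j = adj k j i) (adj_irr : forall k i, ~~ adj k i i)
  (h_sym : forall k i j, adj k i j -> h k i j = h k j i)
  (h_gt0 : forall k i j, adj k i j -> 0 < h k i j)
  (h_sum_le1 : forall k i, \sum_(j | adj k i j) h k i j <= 1)
  (alpha_min : forall k i j, adj k i j ->
     aa_minimizer f adj m w k i j (alpha k i j) (alpha k j i))
  (w_update : forall k i, w k.+1 i =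
     (1 - \sum_(j | adj k i j) h k i j) *: w k i
     + \sum_(j | adj k i j) h k i j *:
         half_step f (1 / mu) beta c1 c2 safeS1 adj m w k i j (alpha k i j) (alpha k j i)).

Local Notation hs k i j :=
  (half_step f (1 / mu) beta c1 c2 safeS1 adj m w k i j (alpha k i j) (alpha k j i)).
Local Notation theta1 := (Num.min (beta * (1 - beta * (1 / mu))) c1).
Local Notation gdiff k i j := (gradconj (f i) (w k i) - gradconj (f j) (w k j)).

Lemma half_step_sum k i j : adj k i j -> hs k i j + hs k j i = w k i + w k j.
Proof.
move=> adj_ij; have [[feasible _] _] := alpha_min _ _ _ adj_ij.
by rewrite !half_stepE (mem_idxC (fun t => adj_sym t i j)); apply: edge_half_step_sum.
Qed.

Lemma half_step_descent k i j :
  conjf (f i) (hs k i j) + conjf (f j) (hs k j i) - conjf (f i) (w k i) - conjf (f j) (w k j)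
    <= - (theta1 * sqnorm (gdiff k i j)).
Proof.
rewrite !half_stepE (mem_idxC (fun t => adj_sym t i j)).
exact: edge_half_step_descent.
Qed.

Lemma fdgm_sum_step k : \sum_(i < n) w k.+1 i = \sum_(i < n) w k i.
Proof.
under eq_bigr do rewrite w_update.
apply: mix_sum_preserved => // i j; [exact: h_sym | exact: half_step_sum].
Qed.

Lemma conjf_mix_le k i :
  conjf (f i) (w k.+1 i) - conjf (f i) (w k i)
    <= \sum_(j | adj k i j) h k i j * (conjf (f i) (hs k i j) - conjf (f i) (w k i)).
Proof.
have h_ge0 j : adj k i j -> 0 <= h k i j by move=> /h_gt0 /ltW.
have a_ge0 : 0 <= 1 - \sum_(j | adj k i j) h k i j by rewrite subr_ge0.
have := conjf_jensen mu_gt0 (f_proper i) (f_lsc i) (f_sconvex i) _ _ _ (w k i)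
  (fun j => hs k i j) h_ge0 a_ge0.
cbv beta; rewrite -w_update.
have -> : \sum_(j | adj k i j) h k i j * (conjf (f i) (hs k i j) - conjf (f i) (w k i))
    = (1 - \sum_(j | adj k i j) h k i j) * conjf (f i) (w k i)
      + \sum_(j | adj k i j) h k i j * conjf (f i) (hs k i j) - conjf (f i) (w k i).
  under eq_bigr do rewrite mulrBr.
  by rewrite sumrB -mulr_suml; ring.
lra.
Qed.

Lemma fdgm_descent k :
  Dfun f (w k.+1) - Dfun f (w k) <=
    - (theta1 * \sum_(i < n) \sum_(j < n | (i < j)%N && adj k i j)
                   h k i j * sqnorm (gdiff k i j)).
Proof.
rewrite /Dfun -sumrB; apply: le_trans (ler_sum _ (fun i _ => conjf_mix_le k i)) _.
rewrite (sum_sym_pairs _ (fun i j => h k i j * (conjf (f i) (hs k i j) - conjf (f i) (w k i)))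
          (adj_sym k) (adj_irr k)).
rewrite mulr_sumr -sumrN; apply: ler_sum => i _.
rewrite mulr_sumr -sumrN; apply: ler_sum => j /andP[_ adj_ij].
rewrite -(h_sym _ _ _ adj_ij) -mulrDr mulrCA -mulrN ler_wpM2l ?(ltW (h_gt0 _ _ _ adj_ij)) //.
have := half_step_descent k i j.
move: (conjf (f i) (hs k i j)) (conjf (f j) (hs k j i)) => a b.
move: (conjf (f i) (w k i)) (conjf (f j) (w k j)) (theta1 * _) => c e t.
lra.
Qed.

Lemma fdgm_monotone k : 0 <= theta1 -> Dfun f (w k.+1) <= Dfun f (w k).
Proof.
move=> theta1_ge0; have := fdgm_descent k.
have : 0 <= theta1 * \sum_(i < n) \sum_(j < n | (i < j)%N && adj k i j)
                       h k i j * sqnorm (gdiff k i j).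
  apply: mulr_ge0 => //; apply: sumr_ge0 => i _; apply: sumr_ge0 => j /andP[_ adj_ij].
  by rewrite mulr_ge0 ?sqnorm_ge0 ?(ltW (h_gt0 _ _ _ adj_ij)).
move: (theta1 * _) (Dfun f (w k.+1)) (Dfun f (w k)) => t D1 D0.
lra.
Qed.

End FDGM.

Theorem mainTheorem3 (R : realType) (n d : nat)
  (f : 'I_n -> 'rV[R]_d -> \bar R) (mu : R)
  (adj : nat -> 'I_n -> 'I_n -> bool) (h : nat -> 'I_n -> 'I_n -> R)
  (beta c1 c2 : R) (m : nat) (safeS1 : bool)
  (alpha : nat -> 'I_n -> 'I_n -> nat -> R)
  (w : nat -> 'I_n -> 'rV[R]_d) :
  (* functions f_i *)
  0 < mu ->
  (forall i, proper_fun (f i)) ->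
  (forall i, lsc_fun (f i)) ->
  (forall i, strongly_convex mu (f i)) ->
  (exists x0 : 'rV[R]_d, exists2 r : R, 0 < r &
     forall y, enorm (y - x0) < r -> forall i, y \in domf (f i)) ->
  (* undirected simple graphs E^k and weights h_ij^k *)
  (forall k i j, adj k i j = adj k j i) ->
  (forall k i, ~~ adj k i i) ->
  (forall k i j, adj k i j -> h k i j = h k j i) ->
  (forall k i j, adj k i j -> 0 < h k i j) ->
  (exists2 hlow : R, 0 < hlow & forall k i j, adj k i j -> hlow <= h k i j) ->
  (forall k i, \sum_(j | adj k i j) h k i j <= 1) ->
  (* parameters *)
  0 < beta < 1 / (1 / mu) -> 0 < c1 -> 0 < c2 -> (1 <= m)%N ->
  (* initial point *)
  \sum_(i < n) w 0%N i = 0 ->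
  (* the AA coefficients are minimizers of the AA subproblems *)
  (forall k i j, adj k i j -> aa_minimizer f adj m w k i j (alpha k i j) (alpha k j i)) ->
  (* the FDGM-AA update *)
  (forall k i, w k.+1 i =
     (1 - \sum_(j | adj k i j) h k i j) *: w k i
     + \sum_(j | adj k i j) h k i j *:
         half_step f (1 / mu) beta c1 c2 safeS1 adj m w k i j (alpha k i j) (alpha k j i)) ->
  let L := 1 / mu in
  let theta1 := Num.min (beta * (1 - beta * L)) c1 in
  (forall k, \sum_(i < n) w k i = 0 /\
     Dfun f (w k.+1) - Dfun f (w k) <=
       - (theta1 * \sum_(i < n) \sum_(j < n | (i < j)%N && adj k i j)
              h k i j * sqnorm (gradconj (f i) (w k i) - gradconj (f j) (w k j))))
  /\ (forall k, Dfun f (w k.+1) <= Dfun f (w k)).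
Proof.
move=> mu_gt0 f_proper f_lsc f_sconvex _ adj_sym adj_irr h_sym h_gt0 _ h_sum_le1
  beta_range c1_gt0 _ _ w0_sum alpha_min w_update L theta1.
have theta1_ge0 : 0 <= theta1 := fdgm_rate_ge0 mu_gt0 beta_range c1_gt0.
have descent := fdgm_descent mu_gt0 f_proper f_lsc f_sconvex adj_sym adj_irr h_sym h_gt0
  h_sum_le1 w_update.
have monotone := fdgm_monotone mu_gt0 f_proper f_lsc f_sconvex adj_sym adj_irr h_sym h_gt0
  h_sum_le1 w_update.
have sum_step := fdgm_sum_step adj_sym adj_irr h_sym alpha_min w_update.
split=> k; [split; last exact: descent | exact: monotone].
by elim: k => // k IH; rewrite sum_step.
Qed.
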